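(* Let $P$ be a proper Poisson prime ideal of $A$. Then for each $i=1,\dots,n-2$, either $s_i\notin P$ or $t_i\notin P$.
   Context: Let $n\ge 3$, $A=\mathbb{C}[x_1,\dots,x_n]$. Fix $s_1,t_1,\dots,s_{n-2},t_{n-2}\in A$ with each $t_i\ne 0$ and $s_i,t_i$ coprime, such that $s_1/t_1,\dots,s_{n-2}/t_{n-2}$ are algebraically independent over $\mathbb{C}$. $A$ carries the Poisson bracket $\{f,g\}=(t_1\cdots t_{n-2})^2\,\mathrm{Jac}(f,g,s_1/t_1,\dots,s_{n-2}/t_{n-2})$, where $\mathrm{Jac}$ denotes the Jacobian determinant (rows = gradients with respect to $x_1,\dots,x_n$). A Poisson prime ideal is a prime ideal $P$ with $\{P,A\}\subseteq P$; it is residually null if $\{a,b\}\in P$ for all $a,b\in A$, and proper if it is not residually null. *)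

From HB Require Import structures.
From mathcomp Require Import all_boot all_order all_algebra.
From mathcomp Require Import ring_quotient fraction.
From mathcomp Require Import Rstruct.
From mathcomp Require Import complex.
From mathcomp Require Import mpoly.

Set Implicit Arguments.
Unset Strict Implicit.
Unset Printing Implicit Defensive.

Import GRing.Theory.
Local Open Scope ring_scope.

Notation CC := (complex Rdefinitions.R).

Notation Apoly n := {mpoly CC[n]}.

Definition mdvd n (d p : Apoly n) : Prop := exists q : Apoly n, p = d * q.

Definition mcoprime n (s t : Apoly n) : Prop :=
  forall d : Apoly n, mdvd d s -> mdvd d t -> exists c : CC, c != 0 /\ d = c%:MP.

Definition alg_indep_fracs n m (s t : 'I_m -> Apoly n) : Prop :=
  forall Q : {mpoly CC[m]}, Q != 0 ->
    mmap (fun c : CC => tofrac (c%:MP : Apoly n))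
         (fun k : 'I_m => tofrac (s k) / tofrac (t k)) Q != 0.

(* Row i of the Jacobian-type matrix, entry in column j (the derivative d/dx_j):
   row 0 = grad f, row 1 = grad g, row k+2 = t_k^2 * grad (s_k/t_k)
   = t_k grad s_k - s_k grad t_k  (k < n-2). *)
Definition poisson_row n (s t : 'I_(n - 2) -> Apoly n) (f g : Apoly n)
  (i j : 'I_n) : Apoly n :=
  if (nat_of_ord i == 0)%N then mderiv j f
  else if (nat_of_ord i == 1)%N then mderiv j g
  else match (insub (nat_of_ord i - 2)%N : option 'I_(n - 2)) with
       | Some k => t k * mderiv j (s k) - s k * mderiv j (t k)
       | None => 0
       end.

(* {f,g} = (t_1...t_{n-2})^2 Jac(f, g, s_1/t_1, ..., s_{n-2}/t_{n-2});
   by multilinearity of the determinant in its rows this is the polynomial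
   det of the matrix above. *)
Definition pbracket n (s t : 'I_(n - 2) -> Apoly n) (f g : Apoly n) : Apoly n :=
  \det (\matrix_(i < n, j < n) poisson_row s t f g i j).

Definition poisson_prime n (s t : 'I_(n - 2) -> Apoly n) (P : {pred Apoly n}) : Prop :=
  [/\ idealr_closed P, prime_idealr_closed P &
      forall a b : Apoly n, a \in P -> pbracket s t a b \in P].

Definition residually_null n (s t : 'I_(n - 2) -> Apoly n) (P : {pred Apoly n}) : Prop :=
  forall a b : Apoly n, pbracket s t a b \in P.

Definition proper_poisson n (s t : 'I_(n - 2) -> Apoly n) (P : {pred Apoly n}) : Prop :=
  poisson_prime s t P /\ ~ residually_null s t P.

From mathcomp Require Import all_boot all_algebra.
From mathcomp Require Import ring_quotient fraction Rstruct complex mpoly.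

Set Implicit Arguments.
Unset Strict Implicit.
Unset Printing Implicit Defensive.

Import GRing.Theory.
Local Open Scope ring_scope.

(* If s_k and t_k both lie in P, the row t_k grad s_k - s_k grad t_k of the
   bracket matrix lies in P, so every bracket lies in P: P is residually null. *)

Section IdealDeterminant.

Variables (R : comNzRingType) (S : {pred R}).
Hypothesis idealS : idealr_closed S.

Lemma idealr_memM a u : u \in S -> a * u \in S.
Proof. by move=> uS; case: (idealr_closed_nontrivial idealS) => _; apply. Qed.

Lemma idealr_memD u v : u \in S -> v \in S -> u + v \in S.
Proof. by case: idealS => _ _ hS uS vS; rewrite -[u]mul1r hS. Qed.

Lemma idealr_memB u v : u \in S -> v \in S -> u - v \in S.
Proof.
move=> uS vS; rewrite addrC -mulN1r.
by case: idealS => _ _; apply.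
Qed.

Lemma det_row_idealr m (A : 'M[R]_m) (r : 'I_m) :
  (forall j, A r j \in S) -> \det A \in S.
Proof.
move=> rowS; rewrite (expand_det_row _ r).
apply: (big_ind (fun x => x \in S)); first by case: idealS.
  exact: idealr_memD.
by move=> j _; rewrite mulrC idealr_memM.
Qed.

End IdealDeterminant.

Lemma poisson_row_lift n (s t : 'I_(n - 2) -> Apoly n) (f g : Apoly n)
    (k : 'I_(n - 2)) (r j : 'I_n) :
  nat_of_ord r = (k + 2)%N ->
  poisson_row s t f g r j = t k * mderiv j (s k) - s k * mderiv j (t k).
Proof.
move=> rk; rewrite /poisson_row rk addn2 /=.
have -> : (k.+2 - 2)%N = k by rewrite -addn2 addnK.
by rewrite valK.
Qed.

Lemma pbracket_idealr n (s t : 'I_(n - 2) -> Apoly n) (S : {pred Apoly n})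
    (k : 'I_(n - 2)) :
  idealr_closed S -> s k \in S -> t k \in S ->
  forall f g, pbracket s t f g \in S.
Proof.
move=> idealS sS tS f g.
have ltr : (k + 2 < n)%N by rewrite addnC -ltn_subRL.
apply: (det_row_idealr idealS (r := Ordinal ltr)) => j.
rewrite mxE (@poisson_row_lift _ _ _ _ _ k (Ordinal ltr)) //.
by apply: idealr_memB; rewrite // mulrC idealr_memM.
Qed.

Theorem lemma2p12 (n : nat) (s t : 'I_(n - 2) -> Apoly n) :
  (3 <= n)%N ->
  (forall i, t i != 0) ->
  (forall i, mcoprime (s i) (t i)) ->
  alg_indep_fracs s t ->
  forall P : {pred Apoly n}, proper_poisson s t P ->
  forall i : 'I_(n - 2), s i \notin P \/ t i \notin P.
Proof.
move=> _ _ _ _ P [[idealP _ _] not_null] i.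
have [sP|] := boolP (s i \in P); last by left.
have [tP|] := boolP (t i \in P); last by right.
by exfalso; apply: not_null; apply: (pbracket_idealr idealP sP tP).
Qed.
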